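(* Let $k\ge 3$ be an odd integer. Then $S_3(k;k)\ge 2(k^2-k-1)$.
   Context: Let $k,r$ be positive integers with $r\mid k$. A solution to $\mathcal{E}$ is a $k$-tuple $(x_1,\dots,x_k)$ of positive integers (not necessarily distinct) with $\sum_{i=1}^{k-1}x_i=x_k$; it lies in $[1,n]$ if all $x_i\in\{1,\dots,n\}$. Given a coloring $\chi$ of $[1,n]$ with colors in $\{0,1,\dots,r-1\}$ (viewed as integers), a solution is $r$-zero-sum if $\sum_{i=1}^k\chi(x_i)\equiv 0\pmod r$. $S_3(k;r)$ denotes the least positive integer $n$ such that every coloring $\chi:[1,n]\to\{0,1,\dots,r-1\}$ admits an $r$-zero-sum solution to $\mathcal{E}$ in $[1,n]$. *)

From mathcomp Require Import all_boot.
Set Implicit Arguments. Unset Strict Implicit. Unset Printing Implicit Defensive.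

Definition is_solution (k : nat) (x : 'I_k -> nat) : Prop :=
  (forall i, 0 < x i) /\
  \sum_(i < k | (i : nat) < k.-1) x i = \sum_(i < k | (i : nat) == k.-1) x i.

Definition in_interval (k n : nat) (x : 'I_k -> nat) : Prop :=
  forall i, 1 <= x i <= n.

Definition is_coloring (r n : nat) (chi : nat -> nat) : Prop :=
  forall m, 1 <= m <= n -> chi m < r.

Definition zero_sum (k r : nat) (chi : nat -> nat) (x : 'I_k -> nat) : Prop :=
  \sum_(i < k) chi (x i) = 0 %[mod r].

Definition S3_property (k r n : nat) : Prop :=
  forall chi : nat -> nat, is_coloring r n chi ->
    exists x : 'I_k -> nat,
      is_solution x /\ in_interval n x /\ zero_sum r chi x.

(* S_3(k;r) >= b  :  every positive n with the property satisfies n >= b,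
   i.e. the least such n is at least b. *)
Definition S3_ge (k r b : nat) : Prop :=
  forall n, 0 < n -> S3_property k r n -> b <= n.

From mathcomp Require Import all_boot.
From mathcomp Require Import zify.

Set Implicit Arguments.
Unset Strict Implicit.
Unset Printing Implicit Defensive.

(* Write k = m + 1 with m even and colour x by 1 if x is odd, by 2 if x is even
   and lies in the window [2m, 2m^2), and by 0 otherwise.  Since every colour is
   congruent to x mod 2, the colour sum T of a solution y_1 + ... + y_m = z is
   congruent to 2z, hence even; as 0 <= T <= 2(m + 1) and m + 1 is odd, a
   zero-sum solution has T = 0 or T = 2(m + 1).  If T = 2(m + 1), all colours
   are 2, so z >= m * 2m leaves the window.  If T = 0, all entries are even and
   outside the window: either some y_i >= 2m^2, forcing
   z >= 2m^2 + 2(m - 1) = 2(k^2 - k - 1), or all y_i < 2m, and then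
   2m <= z < 2m^2 puts z inside the window. *)

Definition window_col (m x : nat) : nat :=
  if odd x then 1 else if (2 * m <= x) && (x < 2 * m * m) then 2 else 0.

Lemma window_col_le2 m x : window_col m x <= 2.
Proof. by rewrite /window_col; case: (odd x) => //; case: ifP. Qed.

Lemma odd_window_col m x : odd (window_col m x) = odd x.
Proof. by rewrite /window_col; case: (odd x) => //; case: ifP. Qed.

Lemma window_col_eq0 m x :
  window_col m x = 0 -> ~~ odd x /\ (x < 2 * m \/ 2 * m * m <= x).
Proof.
rewrite /window_col; case: (odd x) => //; case: ifP => // /negbT.
by rewrite negb_and -ltnNge -leqNgt => /orP[] ->; auto.
Qed.

Lemma window_col_eq2 m x : window_col m x = 2 -> 2 * m <= x < 2 * m * m.
Proof. by rewrite /window_col; case: (odd x) => //; case: ifP. Qed.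

Lemma odd_sum_window_col m I (r : seq I) (P : pred I) (F : I -> nat) :
  odd (\sum_(i <- r | P i) window_col m (F i)) = odd (\sum_(i <- r | P i) F i).
Proof.
apply: (big_ind2 (fun a b => odd a = odd b)) => // [a b c d ab cd|i _].
  by rewrite !oddD ab cd.
exact: odd_window_col.
Qed.

Lemma const_leq_sum m a (F : 'I_m -> nat) :
  (forall i, a <= F i) -> m * a <= \sum_i F i.
Proof.
by move=> leF; rewrite -[m in m * _]card_ord -sum_nat_const; apply: leq_sum.
Qed.

Lemma sum_leq_const m a (F : 'I_m -> nat) :
  (forall i, F i <= a) -> \sum_i F i <= m * a.
Proof.
by move=> leF; rewrite -[m in m * _]card_ord -sum_nat_const; apply: leq_sum.
Qed.

Lemma sum_eq_bound m a (F : 'I_m -> nat) :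
  (forall i, F i <= a) -> \sum_i F i = m * a -> forall i, F i = a.
Proof.
move=> leF sumF i; have [_] := leqif_sum (fun j (_ : true) => leqif_eq (leF j)).
by rewrite sum_nat_const card_ord sumF eqxx => /esym/forallP/(_ i)/eqP.
Qed.

Section WindowColouredSolutions.

Variables (m z : nat) (y : 'I_m -> nat).
Hypotheses (y_pos : forall i, 0 < y i) (sum_y : \sum_i y i = z).

Let col_sum := \sum_i window_col m (y i) + window_col m z.

Lemma col_sum_even : ~~ odd col_sum.
Proof. by rewrite /col_sum oddD odd_sum_window_col sum_y odd_window_col addbb. Qed.

Lemma col_sum_le : col_sum <= 2 * m.+1.
Proof.
have := sum_leq_const (fun i => window_col_le2 m (y i)).
have := window_col_le2 m z; rewrite /col_sum; lia.
Qed.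

Lemma all_window_col0_large :
  0 < m -> (forall i, window_col m (y i) = 0) -> window_col m z = 0 ->
  2 * (m * m + m - 1) <= z.
Proof.
move=> m_gt0 col_y col_z.
have y_ge2 i : 2 <= y i by have [] := window_col_eq0 (col_y i); have := y_pos i; lia.
have [j y_j_big | no_big] :=
  pickP (fun i => 2 * m * m <= y i); last first.
  have y_lt i : y i <= 2 * m - 1.
    have := no_big i; have := window_col_eq0 (col_y i); lia.
  have := const_leq_sum y_ge2; have := sum_leq_const y_lt.
  have := window_col_eq0 col_z; rewrite sum_y; nia.
rewrite -sum_y (bigD1 j) //=; set rest := \sum_(i < m | _) _.
have : #|predC1 j| * 2 <= rest by rewrite -sum_nat_const; apply: leq_sum.
move: y_j_big; rewrite cardC1 card_ord /=; lia.
Qed.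

Lemma not_all_window_col2 :
  (forall i, window_col m (y i) = 2) -> window_col m z <> 2.
Proof.
move=> col_y /window_col_eq2 z_in.
have := const_leq_sum (fun i => proj1 (andP (window_col_eq2 (col_y i)))).
rewrite sum_y; nia.
Qed.

Lemma window_col_no_zero_sum :
  0 < m -> ~~ odd m -> z < 2 * (m * m + m - 1) -> ~ (m.+1 %| col_sum).
Proof.
move=> m_gt0 m_even z_small /dvdnP[q col_sumE].
have := col_sum_le; have := col_sum_even.
rewrite col_sumE oddM /= (negbTE m_even) andbT.
case: q col_sumE => [|[|[|q]]] //= col_sumE _ col_le; last by nia.
- move/eqP: col_sumE; rewrite addn_eq0 sum_nat_eq0 => /andP[/forallP col_y /eqP col_z].
  have := all_window_col0_large m_gt0 (fun i => eqP (col_y i)) col_z; lia.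
- have col_y : \sum_i window_col m (y i) = m * 2.
    have := sum_leq_const (fun i => window_col_le2 m (y i)).
    have := window_col_le2 m z; rewrite /col_sum in col_sumE; lia.
  apply: (not_all_window_col2 (sum_eq_bound (fun i => window_col_le2 m (y i)) col_y)).
  have := window_col_le2 m z; rewrite /col_sum in col_sumE; lia.
Qed.

End WindowColouredSolutions.

Lemma sum_ord_ltn_last m (F : 'I_m.+1 -> nat) :
  \sum_(i < m.+1 | (i : nat) < m) F i = \sum_(i < m) F (widen_ord (leqnSn m) i).
Proof.
rewrite big_mkcond big_ord_recr /= ltnn addn0.
by apply: eq_bigr => i _; rewrite ltn_ord.
Qed.

Lemma sum_ord_eq_last m (F : 'I_m.+1 -> nat) :
  \sum_(i < m.+1 | (i : nat) == m) F i = F ord_max.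
Proof. by rewrite (big_pred1 ord_max). Qed.

Theorem proposition7 (k : nat) (hk3 : 3 <= k) (hodd : odd k) :
  S3_ge k k (2 * (k ^ 2 - k - 1)).
Proof.
case: k hk3 hodd => // m m_ge2 /= m_even n _ has_zero_sum.
rewrite leqNgt; apply/negP => n_small.
have col : is_coloring m.+1 n (window_col m).
  by move=> x _; have := window_col_le2 m x; lia.
have [x [[x_pos]]] := has_zero_sum _ col.
rewrite sum_ord_ltn_last sum_ord_eq_last => x_sol [x_in zs].
have z_small : x ord_max < 2 * (m * m + m - 1).
  by have /andP[_] := x_in ord_max; rewrite expnS expn1 in n_small; lia.
apply: (window_col_no_zero_sum (fun i => x_pos _) x_sol (ltnW m_ge2) m_even z_small).
by move: zs; rewrite /zero_sum big_ord_recr /= mod0n /dvdn => /eqP.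
Qed.
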